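(* Let $\mathbb{F}$ be a field of odd characteristic $p>2$ that is algebraic over $\mathbb{F}_p$. Then \[ SD(\mathbb{F}) = \begin{cases} \operatorname{Aut}(\mathbb{F}) & \text{if } \mathbb{F} \neq \mathbb{F}_5, \\ \{ \mathrm{id}, \ w \mapsto w^3 \} \cong \mathbb{Z}/2\mathbb{Z} & \text{if } \mathbb{F} = \mathbb{F}_5. \end{cases} \]
   Context: For fields $\mathbb{F},\widetilde{\mathbb{F}}$, a map $f:\mathbb{F}\to\widetilde{\mathbb{F}}$ is called an SD-map if for all $x\neq y$ in $\mathbb{F}$ one has $f(x)\neq f(y)$ and \[ f\left(\frac{x+y}{x-y}\right)=\frac{f(x)+f(y)}{f(x)-f(y)}. \] For a field $\mathbb{F}$, $SD(\mathbb{F})$ denotes the set of surjective SD-maps $f:\mathbb{F}\to\mathbb{F}$ (a group under composition). $\operatorname{Aut}(\mathbb{F})$ is the group of field automorphisms of $\mathbb{F}$, and $\mathbb{F}_q$ denotes the finite field with $q$ elements. *)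

From HB Require Import structures.
From mathcomp Require Import all_boot all_order all_algebra.
Set Implicit Arguments. Unset Strict Implicit. Unset Printing Implicit Defensive.
Import GRing.Theory.
Local Open Scope ring_scope.

Definition SD_map (F G : fieldType) (f : F -> G) : Prop :=
  forall x y : F, x <> y ->
    f x <> f y /\ f ((x + y) / (x - y)) = (f x + f y) / (f x - f y).

Definition in_SD (F : fieldType) (f : F -> F) : Prop :=
  SD_map f /\ (forall z : F, exists x : F, f x = z).

Definition field_aut (F : fieldType) (f : F -> F) : Prop :=
  [/\ (forall x y, f (x + y) = f x + f y),
      (forall x y, f (x * y) = f x * f y),
      f 1 = 1 & bijective f].

(* F is algebraic over its prime field: every element is a root of a nonzero
   polynomial with coefficients in the prime subfield (images of integers). *)
Definition algebraic_over_prime_field (F : fieldType) : Prop :=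
  forall x : F, exists q : {poly int},
    map_poly (intr : int -> F) q != 0 /\ root (map_poly (intr : int -> F) q) x.

Definition is_F5 (F : fieldType) : Prop :=
  exists s : seq F, [/\ uniq s, size s = 5%N & forall x : F, x \in s].

(* An SD-map f of fields of characteristic other than 2 fixes 0 and 1 and commutes
   with the Cayley map r |-> (r + 1) / (r - 1); evaluating the SD identity at
   (y, x) and at (y / x, 1) and comparing Cayley transforms makes f
   multiplicative. The SD identity then says that, acting on the projective
   line, f commutes with (x : y) |-> (x + y : x - y) and carries
   (x : y) |-> (c x : y) to (x : y) |-> (f c x : y). If some k satisfies
   k^5 <> k, a word in these maps is a nontrivial translation x |-> x + s, so
   f (x + s) = f x + f s, and multiplicativity spreads this to additivity.
   Otherwise every element is 0, +-1 or a square root of -1, so the field is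
   F_3 or F_5; SD-maps fix 0 and +-1 and can only swap the square roots of
   -1, which in F_5 is w |-> w^3 = w^-1. *)

From HB Require Import structures.
From mathcomp Require Import all_boot all_order all_algebra.
From mathcomp Require Import ring.
From Stdlib Require Import Classical FunctionalExtensionality.
Set Implicit Arguments.
Unset Strict Implicit.
Unset Printing Implicit Defensive.
Import GRing.Theory.
Local Open Scope ring_scope.

Lemma two_neq0_pchar (K : fieldType) (p : nat) :
  p \in [pchar K] -> (2 < p)%N -> 2 != 0 :> K.
Proof.
move=> hp hp2; rewrite -(dvdn_pcharf hp 2).
by apply/negP => /(dvdn_leq (isT : (0 < 2)%N)); rewrite leqNgt hp2.
Qed.

Lemma eqrNr (K : fieldType) (x : K) : 2 != 0 :> K -> (x == - x) = (x == 0).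
Proof. by move=> two; rewrite -addr_eq0 -mulr2n -mulr_natl mulf_eq0 (negbTE two). Qed.

Lemma sum_div_diff_inj (K : fieldType) (c a b : K) :
  2 != 0 :> K -> c != 0 -> a != c -> b != c ->
  (a + c) / (a - c) = (b + c) / (b - c) -> a = b.
Proof.
move=> two c0 ac bc /eqP; rewrite eqr_div ?subr_eq0 // => /eqP e.
have : 2 * c * (b - a) = 0.
  have -> : 2 * c * (b - a) = (a + c) * (b - c) - (b + c) * (a - c) by ring.
  by rewrite e subrr.
by move/eqP; rewrite !mulf_eq0 (negbTE two) (negbTE c0) subr_eq0 => /eqP.
Qed.

Lemma divf_eq1 (K : fieldType) (a b : K) : b != 0 -> (a / b == 1) = (a == b).
Proof. by move=> b0; rewrite -(inj_eq (mulIf b0)) divfK // mul1r. Qed.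

Lemma cayley_div (K : fieldType) (a b : K) : b != 0 -> a != b ->
  (a / b + 1) / (a / b - 1) = (a + b) / (a - b).
Proof. by move=> b0 ab; field; rewrite b0 subr_eq0 ab. Qed.

Lemma expr5_eq (R : idomainType) (x : R) :
  (x ^+ 5 == x) = [|| x == 0, x == 1, x == -1 | x ^+ 2 == -1].
Proof.
have -> : x ^+ 5 = x + x * (x - 1) * (x + 1) * (x ^+ 2 + 1) by ring.
by rewrite -subr_eq0 addrC addKr !mulf_eq0 subr_eq0 !addr_eq0 !orbA.
Qed.

Lemma expr3_id (R : idomainType) (x : R) : x ^+ 5 = x -> x ^+ 2 != -1 -> x ^+ 3 = x.
Proof.
move=> x5 x2; have : (x ^+ 3 - x) * (x ^+ 2 + 1) = x ^+ 5 - x by ring.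
by rewrite x5 subrr => /eqP; rewrite mulf_eq0 subr_eq0 addr_eq0 (negbTE x2) orbF => /eqP.
Qed.

Lemma pair_eq0 (V : zmodType) (x y : V) : ((x, y) == 0) = (x == 0) && (y == 0).
Proof. by []. Qed.

Definition map_pair (T U : Type) (f : T -> U) (v : T * T) : U * U :=
  (f v.1, f v.2).
Definition scale_pair (R : pzRingType) (l : R) (v : R * R) : R * R :=
  (l * v.1, l * v.2).
Definition sum_diff {R : zmodType} (v : R * R) : R * R := (v.1 + v.2, v.1 - v.2).
Definition scale_fst (R : pzRingType) (c : R) (v : R * R) : R * R := (c * v.1, v.2).

Lemma sum_diff_eq0 (K : fieldType) (v : K * K) :
  2 != 0 :> K -> (sum_diff v == 0) = (v == 0).
Proof.
case: v => x y two; rewrite /sum_diff !pair_eq0 /=.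
apply/idP/idP => [/andP[xy0]|/andP[/eqP-> /eqP->]]; last by rewrite addr0 subr0 eqxx.
rewrite subr_eq0 => /eqP xy; move: xy0.
by rewrite xy andbb -mulr2n -mulr_natl mulf_eq0 (negbTE two).
Qed.

(* On the projective line, [f \o M = M' \o f]. *)
Definition intertwines (F G : fieldType) (f : F -> G)
    (M : F * F -> F * F) (M' : G * G -> G * G) :=
  [/\ forall v, v != 0 -> M v != 0,
      forall l v, M' (scale_pair l v) = scale_pair l (M' v) &
      forall v, v != 0 ->
        exists2 l, l != 0 & map_pair f (M v) = scale_pair l (M' (map_pair f v))].

Lemma intertwines_comp (F G : fieldType) (f : F -> G) M1 M1' M2 M2' :
  intertwines f M1 M1' -> intertwines f M2 M2' -> intertwines f (M1 \o M2) (M1' \o M2').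
Proof.
move=> [M1nz M1'Z M1f] [M2nz M2'Z M2f]; split=> [v v0|l v|v v0] /=; first exact/M1nz/M2nz.
  by rewrite M2'Z M1'Z.
have [l1 l10 ->] := M1f _ (M2nz v v0); have [l2 l20 ->] := M2f v v0.
by exists (l1 * l2); rewrite ?mulf_neq0 // M1'Z /scale_pair /= !mulrA.
Qed.

Lemma collinear_scale_pair (K : fieldType) (u w : K * K) :
  u != 0 -> w != 0 -> u.1 * w.2 = w.1 * u.2 -> exists2 l, l != 0 & u = scale_pair l w.
Proof.
case: u w => [u1 u2] [w1 w2] /=; rewrite /scale_pair !pair_eq0 => u0 w0 e.
have [w2_0|w2_0] := eqVneq w2 0.
  rewrite w2_0 eqxx andbT in w0.
  have u2_0 : u2 = 0.
    apply/eqP; move: (eqxx (w1 * u2)).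
    by rewrite -{1}e w2_0 mulr0 eq_sym mulf_eq0 (negbTE w0).
  rewrite u2_0 eqxx andbT in u0.
  by exists (u1 / w1); rewrite ?mulf_neq0 ?invr_eq0 ?divfK ?w2_0 ?u2_0 ?mulr0.
exists (u2 / w2); last by rewrite divfK // mulrAC [u2 * _]mulrC -e mulfK.
rewrite mulf_neq0 ?invr_eq0 //; apply: contraNneq u0 => u2_0.
rewrite u2_0 eqxx andbT; move: (eqxx (u1 * w2)).
by rewrite {2}e u2_0 mulr0 mulf_eq0 (negbTE w2_0) orbF.
Qed.

(* [sum_diff] and [scale_fst c] are the matrices [[1, 1], [1, -1]] and
   [diag(c, 1)]; [shear_coef k] is the value of [c] that kills the lower left
   entry of the matrix of [shear_word k c]. *)
Definition shear_word (R : pzRingType) (a c : R) :=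
  sum_diff \o scale_fst a \o sum_diff \o scale_fst c \o sum_diff \o scale_fst (- a)
           \o sum_diff.
Definition shear_coef (K : fieldType) (k : K) := - ((k + 1) / (k - 1)) ^+ 2.
Definition shear_shift (K : fieldType) (k : K) := 2 * (k ^+ 2 + 1) / (k ^+ 2 - 1).

Lemma shear_wordE (K : fieldType) (k x y : K) : k != 1 -> k != -1 ->
  shear_word k (shear_coef k) (x, y) =
    scale_pair (4 * k * (k + 1) / (k - 1)) (x + shear_shift k * y, y).
Proof.
move=> k1 kN1; have k1' : k - 1 != 0 by rewrite subr_eq0.
have kN1' : k + 1 != 0 by rewrite addr_eq0.
have k2 : k ^+ 2 - 1 != 0 by rewrite subr_eq0 sqrf_eq1 negb_or k1.
rewrite /shear_word /shear_coef /shear_shift /scale_pair /sum_diff /scale_fst /=.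
by congr pair; field; rewrite k1' ?k2.
Qed.

Section SDMap.
Variables (F G : fieldType) (f : F -> G).
Hypotheses (F2 : 2 != 0 :> F) (G2 : 2 != 0 :> G) (fSD : SD_map f).

Lemma SD_map_inj : injective f.
Proof. by move=> x y fxy; case: (eqVneq x y) => // /eqP /fSD []. Qed.

Lemma SD_mapE x y : x != y -> f ((x + y) / (x - y)) = (f x + f y) / (f x - f y).
Proof. by move/eqP/fSD => []. Qed.

Lemma SD_map0 : f 0 = 0.
Proof.
apply/eqP; apply: contraT => f0.
have f1 : f 1 = (f 1 + f 0) / (f 1 - f 0).
  by have := SD_mapE (oner_neq0 F); rewrite addr0 subr0 divr1.
have fN1 : f 1 = (f (-1) + f 0) / (f (-1) - f 0).
  have := @SD_mapE (- 1) 0; rewrite oppr_eq0 oner_neq0 => /(_ isT).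
  by rewrite addr0 subr0 divff ?oppr_eq0 ?oner_neq0.
have neq0 x : x != 0 -> f x != f 0 by move=> x0; rewrite (inj_eq SD_map_inj).
have N10 : -1 != 0 :> F by rewrite oppr_eq0 oner_neq0.
have := sum_div_diff_inj G2 f0 (neq0 _ (oner_neq0 F)) (neq0 _ N10).
by move/(_ (etrans (esym f1) fN1))/SD_map_inj/eqP; rewrite eqrNr // oner_eq0.
Qed.

Lemma SD_map_eq0 x : (f x == 0) = (x == 0).
Proof. by rewrite -SD_map0 (inj_eq SD_map_inj). Qed.

Lemma SD_map1 : f 1 = 1.
Proof.
have := SD_mapE (oner_neq0 F); rewrite addr0 subr0 divr1 SD_map0 addr0 subr0.
by move->; rewrite divff // SD_map_eq0 oner_neq0.
Qed.

Lemma SD_map_cayley r : r != 1 -> f ((r + 1) / (r - 1)) = (f r + 1) / (f r - 1).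
Proof. by move/SD_mapE->; rewrite SD_map1. Qed.

Lemma SD_map_div x y : f (y / x) = f y / f x.
Proof.
have [->|x0] := eqVneq x 0; first by rewrite !invr0 !mulr0 SD_map0 invr0 mulr0.
have fx0 : f x != 0 by rewrite SD_map_eq0.
have [->|yx] := eqVneq y x; first by rewrite !divff // SD_map1.
have fyx : f y != f x by rewrite (inj_eq SD_map_inj).
apply: (sum_div_diff_inj G2 (oner_neq0 G)).
- by rewrite -SD_map1 (inj_eq SD_map_inj) divf_eq1.
- by rewrite divf_eq1.
by rewrite -SD_map_cayley ?divf_eq1 // !cayley_div ?SD_mapE.
Qed.

Lemma SD_mapV x : f x^-1 = (f x)^-1.
Proof. by rewrite -div1r SD_map_div SD_map1 div1r. Qed.

Lemma SD_mapM : {morph f : x y / x * y}.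
Proof. by move=> x y; rewrite -{1}(invrK y) SD_map_div SD_mapV invrK. Qed.

Lemma SD_mapX x n : f (x ^+ n) = f x ^+ n.
Proof. by elim: n => [|n IHn]; rewrite ?SD_map1 // !exprS SD_mapM IHn. Qed.

Lemma SD_mapN1 : f (-1) = -1.
Proof.
have : f (-1) ^+ 2 == 1 by rewrite -SD_mapX sqrrN expr1n SD_map1.
rewrite sqrf_eq1 -{1}SD_map1 (inj_eq SD_map_inj) eq_sym eqrNr // oner_eq0.
by move/eqP.
Qed.

Lemma SD_mapN x : f (- x) = - f x.
Proof. by rewrite -mulN1r SD_mapM SD_mapN1 mulN1r. Qed.

Lemma SD_map_sum_diff a b : f (a + b) * (f a - f b) = f (a - b) * (f a + f b).
Proof.
have [->|ab] := eqVneq a b; first by rewrite !subrr SD_map0 mulr0 mul0r.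
have := SD_mapE ab; rewrite SD_map_div => /eqP.
by rewrite eqr_div ?SD_map_eq0 ?subr_eq0 ?(inj_eq SD_map_inj) // [f (a - b) * _]mulrC => /eqP.
Qed.

Lemma map_pair_eq0 v : (map_pair f v == 0) = (v == 0).
Proof. by case: v => x y; rewrite /map_pair !pair_eq0 /= !SD_map_eq0. Qed.

Lemma intertwines_sum_diff : intertwines f sum_diff sum_diff.
Proof.
split=> [v|l [x y]|[x y] v0]; first by rewrite sum_diff_eq0.
  by rewrite /scale_pair /sum_diff /= mulrDr mulrBr.
apply: collinear_scale_pair; rewrite ?map_pair_eq0 ?sum_diff_eq0 ?map_pair_eq0 //=.
by rewrite SD_map_sum_diff mulrC.
Qed.

Lemma intertwines_scale_fst c : c != 0 -> intertwines f (scale_fst c) (scale_fst (f c)).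
Proof.
move=> c0; split=> [[x y]|l [x y]|[x y] _].
- by rewrite /scale_fst !pair_eq0 /= mulf_eq0 (negbTE c0).
- by rewrite /scale_pair /scale_fst /= mulrCA.
- by exists 1; rewrite ?oner_neq0 // /scale_pair /map_pair /scale_fst /= !mul1r SD_mapM.
Qed.

Lemma intertwines_shear_word a c : a != 0 -> c != 0 ->
  intertwines f (shear_word a c) (shear_word (f a) (f c)).
Proof.
move=> a0 c0; rewrite /shear_word -SD_mapN.
have sd := intertwines_sum_diff.
by do !apply: intertwines_comp => //; apply: intertwines_scale_fst; rewrite ?oppr_eq0.
Qed.

Lemma SD_map_shift k x : k != 0 -> k != 1 -> k != -1 ->
  f (x + shear_shift k) = f x + shear_shift (f k).
Proof.
move=> k0 k1 kN1.
have fk1 : f k != 1 by rewrite -SD_map1 (inj_eq SD_map_inj).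
have fkN1 : f k != -1 by rewrite -SD_mapN1 (inj_eq SD_map_inj).
have c0 : shear_coef k != 0.
  by rewrite oppr_eq0 expf_eq0 /= mulf_eq0 invr_eq0 subr_eq0 addr_eq0 negb_or k1 kN1.
have fc : f (shear_coef k) = shear_coef (f k) by rewrite SD_mapN SD_mapX SD_map_cayley.
have [_ _ /(_ (x, 1))] := intertwines_shear_word k0 c0.
rewrite pair_eq0 oner_eq0 andbF => /(_ isT)[l _].
have -> : map_pair f (x, 1) = (f x, 1) by rewrite /map_pair SD_map1.
rewrite fc !shear_wordE // /map_pair /scale_pair /= !mulr1 => -[].
set a := 4 * k * (k + 1) / (k - 1); rewrite SD_mapM => e fa.
have four : 4 != 0 :> F by rewrite -[4]/((2 * 2)%:R) natrM mulf_neq0.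
have fa0 : f a != 0 by rewrite SD_map_eq0 /a !mulf_neq0 // ?invr_eq0 ?subr_eq0 ?addr_eq0.
by apply: (mulfI fa0); rewrite e fa mulrA.
Qed.

Lemma SD_mapD (k : F) : k ^+ 5 != k -> {morph f : x y / x + y}.
Proof.
rewrite expr5_eq !negb_or => /and4P[k0 k1 kN1 kI] x y.
have fs := SD_map_shift 0 k0 k1 kN1; rewrite SD_map0 !add0r in fs.
have s0 : shear_shift k != 0.
  by rewrite !mulf_neq0 ?invr_eq0 ?subr_eq0 ?sqrf_eq1 ?negb_or ?k1 // addr_eq0.
have [->|y0] := eqVneq y 0; first by rewrite SD_map0 !addr0.
set l := y / shear_shift k; have l0 : l != 0 by rewrite mulf_neq0 ?invr_eq0.
have -> : x + y = l * (x / l + shear_shift k) by rewrite mulrDr mulrC divfK // divfK.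
by rewrite SD_mapM SD_map_shift // -fs mulrDr -!SD_mapM mulrC divfK // divfK.
Qed.

End SDMap.

Lemma rmorphism_SD_map (F G : fieldType) (f : {rmorphism F -> G}) : SD_map f.
Proof.
move=> x y xy; split=> [/fmorph_inj //|].
by rewrite fmorph_div rmorphD rmorphB.
Qed.

Lemma field_aut_in_SD (F : fieldType) (f : F -> F) : field_aut f -> in_SD f.
Proof.
move=> [fD fM f1 [g fK gK]]; split=> [|z]; last by exists (g z).
have f0 : f 0 = 0 by apply: (addrI (f 0)); rewrite -fD !addr0.
exact: (rmorphism_SD_map (HB.pack f (GRing.isNmodMorphism.Build _ _ f (f0, fD))
                                    (GRing.isMonoidMorphism.Build _ _ f (f1, fM)))).
Qed.

Lemma inj_surj_bij (T : choiceType) (U : eqType) (f : T -> U) :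
  injective f -> (forall u, exists x, f x = u) -> bijective f.
Proof.
move=> f_inj f_surj; have f_surjb u : exists x, f x == u.
  by have [x <-] := f_surj u; exists x.
exists (fun u => xchoose (f_surjb u)) => [x|u]; last exact/eqP/(xchooseP (f_surjb u)).
by apply: f_inj; apply/eqP/(xchooseP (f_surjb (f x))).
Qed.

Lemma in_SD_field_aut (F : fieldType) (f : F -> F) (k : F) :
  2 != 0 :> F -> k ^+ 5 != k -> in_SD f -> field_aut f.
Proof.
move=> two k5 [fSD f_surj]; split.
- exact: (SD_mapD two two fSD k5).
- exact: (SD_mapM two two fSD).
- exact: (SD_map1 two two fSD).
- exact: (inj_surj_bij (SD_map_inj fSD) f_surj).
Qed.

Lemma uniq_five (K : fieldType) (a : K) :
  2 != 0 :> K -> a != 0 -> a ^+ 2 != 1 -> uniq [:: 0; 1; -1; a; -a].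
Proof.
rewrite sqrf_eq1 negb_or => two a0 /andP[a1 aN1].
rewrite /= !inE !negb_or ![0 == _]eq_sym !oppr_eq0 a0 oner_eq0 !eqrNr // oner_eq0 a0.
by rewrite eqr_opp ![1 == _]eq_sym ![-1 == _]eq_sym eqr_oppLR a1 aN1.
Qed.

Lemma is_F5_expr5 (K : fieldType) : 2 != 0 :> K -> is_F5 K -> forall x : K, x ^+ 5 = x.
Proof.
move=> two [s [s_uniq s_size s_all]] x; apply/eqP; apply: contraT => x5.
have [x0 x1 xN1 xI] : [/\ x != 0, x != 1, x != -1 & x ^+ 2 != -1].
  by apply/and4P; move: x5; rewrite expr5_eq !negb_or.
have x2 : x ^+ 2 != 1 by rewrite sqrf_eq1 negb_or x1.
have [_ s_five] := uniq_min_size (uniq_five two x0 x2) (fun y _ => s_all y) (eq_leq s_size).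
have invE y : (x^-1 == y) = (x * y == 1) by rewrite -(inj_eq (mulfI x0)) mulfV // eq_sym.
move: (s_all x^-1); rewrite -s_five !inE !invE mulr0 eq_sym oner_eq0 mulr1 mulrN1.
by rewrite eqr_oppLR mulrN eqr_oppLR -expr2 (negbTE x1) (negbTE xN1) (negbTE x2) (negbTE xI).
Qed.

Lemma is_F5_sqrtN1 (K : fieldType) (i : K) :
  2 != 0 :> K -> (forall x : K, x ^+ 5 = x) -> i ^+ 2 = -1 -> is_F5 K.
Proof.
move=> two K5 i2; exists [:: 0; 1; -1; i; -i]; split => // [|x].
  have i0 : i != 0.
    by apply/eqP => i0; move/eqP: i2; rewrite i0 expr0n eq_sym oppr_eq0 oner_eq0.
  by rewrite uniq_five // i2 eq_sym eqrNr // oner_eq0.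
move/eqP: (K5 x); rewrite expr5_eq -i2 eqf_sqr !inE.
by case/or4P => [->|->|->|/orP[]->]; rewrite ?orbT.
Qed.

Lemma inv_in_SD (K : fieldType) :
  (forall x : K, x != 0 -> x ^+ 4 = 1) -> in_SD (@GRing.inv K).
Proof.
move=> K4; split=> [x y xy|z]; last by exists z^-1; rewrite invrK.
split=> [/invr_inj //|]; have {}xy : x != y by apply/eqP.
have [x0 | x0] := eqVneq x 0.
  move: xy; rewrite x0 eq_sym invr0 add0r sub0r => y0.
  by field; rewrite !oppr_eq0 y0 oner_eq0.
have [y0 | y0] := eqVneq y 0.
  by rewrite y0 invr0 addr0 subr0; field; rewrite x0 oner_eq0.
have [/eqP | xy0] := eqVneq (x + y) 0.
  by rewrite addr_eq0 => /eqP->; rewrite invrN !addNr !mul0r invr0.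
have sq : x ^+ 2 + y ^+ 2 = 0.
  have : (x ^+ 2 - y ^+ 2) * (x ^+ 2 + y ^+ 2) = 0.
    by rewrite -subr_sqr -!exprM K4 // K4 // subrr.
  by move/eqP; rewrite mulf_eq0 subr_eq0 eqf_sqr (negbTE xy) -addr_eq0 (negbTE xy0) => /eqP.
have yx : y - x != 0 by rewrite subr_eq0 eq_sym.
have -> : (x^-1 + y^-1) / (x^-1 - y^-1) = (x + y) / (y - x) by field; rewrite x0 y0 yx.
rewrite invf_div; apply/eqP; rewrite eqr_div // ?subr_eq0 // -subr_eq0.
have -> : (x - y) * (y - x) - (x + y) * (x + y) = - 2 * (x ^+ 2 + y ^+ 2) by ring.
by rewrite sq mulr0.
Qed.

Lemma cube_in_SD (K : fieldType) :
  (forall x : K, x ^+ 5 = x) -> in_SD (fun w : K => w ^+ 3).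
Proof.
move=> K5; have K4 (x : K) : x != 0 -> x ^+ 4 = 1.
  by move=> x0; apply: (mulfI x0); rewrite -exprS K5 mulr1.
suff -> : (fun w : K => w ^+ 3) = GRing.inv by apply: inv_in_SD.
apply: functional_extensionality => x.
have [->|x0] := eqVneq x 0; first by rewrite expr0n invr0.
by apply: (mulfI x0); rewrite mulfV // -exprS K4.
Qed.

Lemma SD_map_expr5 (K : fieldType) (f : K -> K) :
  2 != 0 :> K -> (forall x : K, x ^+ 5 = x) -> SD_map f ->
  f = id \/ f = (fun w => w ^+ 3).
Proof.
move=> two K5 fSD.
have fixed x : x ^+ 2 != -1 -> f x = x.
  move/eqP: (K5 x); rewrite expr5_eq => /or4P[] /eqP->; rewrite ?eqxx // => _.
  - exact: (SD_map0 two two fSD).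
  - exact: (SD_map1 two two fSD).
  - exact: (SD_mapN1 two two fSD).
have sqrtN1 x : x ^+ 2 = -1 -> f x = x \/ f x = - x.
  move=> x2; have := eqf_sqr (f x) x.
  rewrite -(SD_mapX two two fSD) x2 (SD_mapN1 two two fSD) eqxx.
  by case/esym/orP => /eqP; [left | right].
have [[i [i2 fi]] | no_swap] := classic (exists i, i ^+ 2 = -1 /\ f i = - i).
  right; apply: functional_extensionality => x.
  have [x2|x2] := eqVneq (x ^+ 2) (-1); last first.
    by rewrite expr3_id ?fixed.
  have /orP[/eqP->|/eqP->] : (x == i) || (x == - i) by rewrite -eqf_sqr x2 i2.
    by rewrite fi exprS i2 mulrN1.
  by rewrite (SD_mapN two two fSD) fi opprK exprS sqrrN i2 mulrN1 opprK.
left; apply: functional_extensionality => x.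
have [x2|/fixed //] := eqVneq (x ^+ 2) (-1).
by case: (sqrtN1 x x2) => // fx; case: no_swap; exists x.
Qed.

Lemma in_SD_expr5 (K : fieldType) (f : K -> K) :
  2 != 0 :> K -> (forall x : K, x ^+ 5 = x) ->
  in_SD f <-> f = id \/ f = (fun w => w ^+ 3).
Proof.
move=> two K5; split=> [[fSD _]|[]->]; first exact: SD_map_expr5.
  by split=> [x y|z]; last exists z.
exact: cube_in_SD.
Qed.

Unset Implicit Arguments.

Theorem theorem1p5 (F : fieldType) (p : nat) (hp : p \in [pchar F])
  (hp2 : (2 < p)%N) (halg : algebraic_over_prime_field F) :
  (~ is_F5 F -> forall f : F -> F, in_SD f <-> field_aut f) /\
  (is_F5 F -> forall f : F -> F,
      in_SD f <-> (f = id \/ f = (fun w => w ^+ 3))).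
Proof.
have two := two_neq0_pchar hp hp2.
have [[k k5] | F5] := classic (exists k : F, k ^+ 5 != k).
  have notF5 : ~ is_F5 F by move/(is_F5_expr5 two)/(_ k)/eqP; rewrite (negbTE k5).
  split=> // _ f; split; [exact: (in_SD_field_aut two k5) | exact: field_aut_in_SD].
have {}F5 (x : F) : x ^+ 5 = x.
  by apply/eqP; apply: contraT => k5; exfalso; apply: F5; exists x.
split=> [notF5 f | _ f]; last exact: in_SD_expr5.
have cube_id : (fun w : F => w ^+ 3) = id.
  apply: functional_extensionality => x; apply: expr3_id (F5 x) _.
  by apply/eqP => x2; apply: notF5; apply: is_F5_sqrtN1 two F5 x2.
have aut_id : field_aut (@id F) by split=> //; exists id.
split=> [/(in_SD_expr5 f two F5)|]; last exact: field_aut_in_SD.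
by rewrite cube_id => -[]->.
Qed.
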